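(* Let $B:=M_n(\mathbb{C})$, let $R$ be a tolerance relation on $\{1,\ldots,n\}$ and let $A=A(R)\subset M_n(\mathbb{C})$ be the subspace of matrices $a$ with $a_{ij}=0$ whenever $(i,j)\notin R$. Let $F:\mathcal{S}(B)\to\mathcal{S}(A)$ be the map restricting states of $B$ to $A$. The following are equivalent: (i) $F$ is injective; (ii) the restriction of $F$ to pure states of $B$ is injective; (iii) $A=B=M_n(\mathbb{C})$.
   Context: A tolerance relation on a set $X$ is a reflexive and symmetric relation $R\subset X\times X$. $A(R)$ is an operator system in $M_n(\mathbb{C})$ (it contains the identity and is closed under adjoints). A state of $A$ is a linear functional $\varphi:A\to\mathbb{C}$ with $\varphi(a)\ge0$ for every positive semidefinite $a\in A$ and $\varphi(1)=1$; $\mathcal{S}(\cdot)$ denotes the set of states; pure states are extremal states. *)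

From HB Require Import structures.
From mathcomp Require Import all_boot all_order all_algebra.
From mathcomp Require Import complex reals.
Set Implicit Arguments. Unset Strict Implicit. Unset Printing Implicit Defensive.
Import Order.TTheory GRing.Theory Num.Theory.
Local Open Scope ring_scope.

Section Defs.
Variables (R : realType) (n : nat).
Local Notation C := R[i].

Definition adjmx (a : 'M[C]_n) : 'M[C]_n := (map_mx (@Num.conj C) a)^T.

Definition psd (a : 'M[C]_n) : Prop :=
  adjmx a = a /\
  forall v : 'cV[C]_n, 0 <= ((map_mx (@Num.conj C) v)^T *m a *m v) 0 0.

Definition inA (T : rel 'I_n) (a : 'M[C]_n) : Prop :=
  forall i j, ~~ T i j -> a i j = 0.

Definition tolerance (T : rel 'I_n) : Prop := reflexive T /\ symmetric T.

Definition is_state (phi : 'M[C]_n -> C) : Prop :=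
  (forall (c : C) (a b : 'M[C]_n), phi (c *: a + b) = c * phi a + phi b) /\
  (forall a, psd a -> 0 <= phi a) /\
  phi 1%:M = 1.

Definition is_pure_state (phi : 'M[C]_n -> C) : Prop :=
  is_state phi /\
  forall (phi1 phi2 : 'M[C]_n -> C) (t : C),
    is_state phi1 -> is_state phi2 -> 0 < t -> t < 1 ->
    (forall a, phi a = t * phi1 a + (1 - t) * phi2 a) ->
    (forall a, phi1 a = phi a) /\ (forall a, phi2 a = phi a).

(* F(phi) = F(psi), where F restricts states of B to A(T) *)
Definition same_restriction (T : rel 'I_n) (phi psi : 'M[C]_n -> C) : Prop :=
  forall a, inA T a -> phi a = psi a.

End Defs.

From HB Require Import structures.
From mathcomp Require Import all_boot all_order all_algebra.
From mathcomp Require Import complex reals ring.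
From Stdlib Require Import FunctionalExtensionality.
Set Implicit Arguments. Unset Strict Implicit. Unset Printing Implicit Defensive.
Import Order.TTheory GRing.Theory Num.Theory.
Local Open Scope ring_scope.

(* For (ii) => (iii), let (i, j)
   lie outside R, so i <> j.  The vector states of e_i + e_j and e_i - e_j
   agree on A(R), since they differ only in the (i, j) and (j, i) entries, but
   take the values 1/2 and -1/2 at the matrix unit E_ij.  Vector states
   omega_v are pure: if t phi <= omega_v on positive matrices with t > 0, then
   phi vanishes on |x><x| for x orthogonal to v; positivity of phi on
   |l x + y><l x + y| for every scalar l then kills |x><y| and |y><x| as well,
   so phi is proportional to omega_v on rank-one matrices, hence everywhere. *)

Lemma real_affine_ge0_eq0 (F : numFieldType) (a d : F) :
  (forall s, s \is Num.real -> 0 <= s * a + d) -> a = 0.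
Proof.
move=> ge0; have d_ge0 : 0 <= d by have := ge0 0; rewrite mul0r add0r; apply.
have a_real : a \is Num.real.
  have : (1 * a + d) - d \is Num.real by rewrite rpredB ?ger0_real ?ge0.
  by rewrite mul1r addrK.
have [//|a_neq0] := eqVneq a 0.
have s_real : - (d + 1) / a \is Num.real.
  by rewrite rpredM ?rpredV // rpredN rpredD ?rpred1 ?ger0_real.
have := ge0 _ s_real.
by rewrite divfK // opprD addrAC addNr add0r oppr_ge0 ler10.
Qed.

Lemma conj_affine_ge0_eq0 (C : numClosedFieldType) (q r d : C) :
  (forall l, 0 <= l * q + l^* * r + d) -> q = 0 /\ r = 0.
Proof.
move=> ge0.
have qr0 : q + r = 0.
  apply: (@real_affine_ge0_eq0 _ _ d) => s s_real.
  by rewrite mulrDr -{2}(conj_Creal s_real) ge0.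
have iqr0 : 'i * (q - r) = 0.
  apply: (@real_affine_ge0_eq0 _ _ d) => s s_real.
  have := ge0 (s * 'i); rewrite rmorphM /= conjCi conj_Creal //.
  by congr (0 <= _ + d); ring.
have rq : r = q.
  by apply/esym/subr0_eq/(mulfI (neq0Ci C)); rewrite iqr0 mulr0.
have q0 : q = 0.
  have : q *+ 2 == 0 by rewrite mulr2n -{2}rq qr0.
  by rewrite mulrn_eq0 => /eqP.
by rewrite rq q0.
Qed.

Section VectorStates.
Variables (C : numClosedFieldType) (n : nat).
Implicit Types (x y z v : 'cV[C]_n) (a : 'M[C]_n).

Definition vadj x : 'rV[C]_n := (map_mx Num.conj x)^T.
Definition vdot x y : C := (vadj x *m y) 0 0.
Definition outer x y : 'M[C]_n := x *m vadj y.
Definition vstate v a : C := vdot v (a *m v) / vdot v v.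

Lemma vdotE x y : vdot x y = \sum_k (x k 0)^* * y k 0.
Proof. by rewrite /vdot !mxE; apply: eq_bigr => k _; rewrite !mxE. Qed.

Lemma vdotC x y : vdot y x = (vdot x y)^*.
Proof.
rewrite !vdotE rmorph_sum; apply: eq_bigr => k _.
by rewrite rmorphM /= conjCK mulrC.
Qed.

Lemma vdotDr x c y z : vdot x (c *: y + z) = c * vdot x y + vdot x z.
Proof.
rewrite !vdotE mulr_sumr -big_split; apply: eq_bigr => k _ /=.
by rewrite !mxE mulrDr mulrCA.
Qed.

Lemma vdotDl x c y z : vdot (c *: y + z) x = c^* * vdot y x + vdot z x.
Proof. by rewrite vdotC vdotDr rmorphD rmorphM /= -!vdotC. Qed.

Lemma vdot_delta k y : vdot (delta_mx k 0) y = y k 0.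
Proof.
rewrite vdotE (bigD1 k) //= big1 ?addr0 => [|l /negPf lk].
  by rewrite !mxE !eqxx conjC1 mul1r.
by rewrite !mxE lk conjC0 mul0r.
Qed.

Lemma outerE x y k l : outer x y k l = x k 0 * (y l 0)^*.
Proof. by rewrite !mxE big_ord1 !mxE. Qed.

Lemma outerDl c x y z : outer (c *: x + y) z = c *: outer x z + outer y z.
Proof. by apply/matrixP => k l; rewrite !(outerE, mxE) mulrDl mulrA. Qed.

Lemma outerDr c x y z : outer z (c *: x + y) = c^* *: outer z x + outer z y.
Proof.
by apply/matrixP => k l; rewrite !(outerE, mxE) rmorphD rmorphM /= mulrDr mulrCA.
Qed.

Lemma outer_delta k l : outer (delta_mx k 0) (delta_mx l 0) = delta_mx k l.
Proof.
apply/matrixP => i j; rewrite outerE !mxE andbT.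
by case: (i == k); case: (j == l); rewrite ?conjC1 ?conjC0 ?mulr1 ?mulr0 ?mul0r.
Qed.

Lemma vstate_outer v x y : vstate v (outer x y) = vdot v x * vdot y v / vdot v v.
Proof. by rewrite /vstate /vdot /outer -mulmxA mulmxA [in LHS]mxE big_ord1. Qed.

Lemma vstate_linear v : linear_for *%R (vstate v).
Proof.
move=> c a b; rewrite /vstate mulmxDl -scalemxAl vdotDr.
by rewrite mulrDl mulrA.
Qed.

Lemma vstate1 v : vdot v v != 0 -> vstate v 1%:M = 1.
Proof. by move=> vv_neq0; rewrite /vstate mul1mx divff. Qed.

Lemma vdot_pair i j s : i != j -> s^* * s = 1 ->
  vdot (s *: delta_mx j 0 + delta_mx i 0) (s *: delta_mx j 0 + delta_mx i 0) = 2.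
Proof.
move=> ij ss1; rewrite !(vdotDl, vdotDr) !vdot_delta !mxE !eqxx (negPf ij).
by rewrite eq_sym (negPf ij) /= !mulr0 !addr0 !mulr1 add0r ss1.
Qed.

Lemma vstate_pair i j s a : i != j -> s^* * s = 1 ->
  vstate (s *: delta_mx j 0 + delta_mx i 0) a =
  (a i i + a j j + s * a i j + s^* * a j i) / 2.
Proof.
move=> ij ss1; rewrite /vstate vdot_pair // mulmxDr -scalemxAr -!colE.
rewrite !(vdotDl, vdotDr) !vdot_delta !mxE; congr (_ / 2).
by rewrite mulrDr mulrA ss1 mul1r; ring.
Qed.

Lemma vstate_pair_delta i j s : i != j -> s^* * s = 1 ->
  vstate (s *: delta_mx j 0 + delta_mx i 0) (delta_mx i j) = s / 2.
Proof.
move=> ij ss1; rewrite vstate_pair // !mxE !eqxx (negPf ij) eq_sym (negPf ij).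
by rewrite /= mulr0 !addr0 add0r mulr1.
Qed.

End VectorStates.

HB.instance Definition _ (C : numClosedFieldType) (n : nat) (v : 'cV[C]_n) :=
  GRing.isLinear.Build C 'M[C]_n C *%R (vstate v) (vstate_linear v).

Section LinearFunctional.
Variables (C : numClosedFieldType) (n : nat) (phi : 'M[C]_n -> C).
Hypothesis phi_linear : linear_for *%R phi.
HB.instance Definition _ := GRing.isLinear.Build C 'M[C]_n C *%R phi phi_linear.

Variable v : 'cV[C]_n.
Hypothesis vv_neq0 : vdot v v != 0.
Hypothesis phi_perp :
  forall x y, vdot v x = 0 -> phi (outer x y) = 0 /\ phi (outer y x) = 0.

Lemma outer_vstate_scale x y :
  phi (outer x y) = vstate v (outer x y) * (phi (outer v v) / vdot v v).
Proof.
pose coef z := vdot v z / vdot v v.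
have split z : z = coef z *: v + (- coef z *: v + z).
  by rewrite addrA -scalerDl addrN scale0r add0r.
have perp z : vdot v (- coef z *: v + z) = 0.
  by rewrite vdotDr mulNr mulfVK ?addNr.
have -> : phi (outer x y) = coef x * phi (outer v y).
  by rewrite {1}[x]split outerDl phi_linear (phi_perp _ (perp x)).1 addr0.
have -> : phi (outer v y) = (coef y)^* * phi (outer v v).
  by rewrite {1}[y]split outerDr phi_linear (phi_perp _ (perp y)).2 addr0.
have vv_real : (vdot v v)^* = vdot v v by rewrite -vdotC.
rewrite vstate_outer /coef fmorph_div /= vv_real -vdotC.
by field.
Qed.

Lemma eq_vstate_of_perp : phi 1%:M = 1 -> phi =1 vstate v.
Proof.
move=> phi1.
pose K := phi (outer v v) / vdot v v.
have phiK a : phi a = vstate v a * K.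
  rewrite {1}(matrix_sum_delta a) [in RHS](matrix_sum_delta a).
  rewrite !linear_sum mulr_suml.
  apply: eq_bigr => k _; rewrite !linear_sum mulr_suml; apply: eq_bigr => l _.
  by rewrite !linearZ /= -outer_delta outer_vstate_scale /K !mulrA.
have K1 : K = 1 by have := phiK 1%:M; rewrite phi1 vstate1 // mul1r.
by move=> a; rewrite phiK K1 mulr1.
Qed.

End LinearFunctional.

Section States.
Variables (R : realType) (n : nat).
Implicit Types (x y v : 'cV[R[i]]_n).

Lemma psd_outer x : psd (outer x x).
Proof.
split.
  apply/matrixP => k l; rewrite /adjmx [LHS]mxE [LHS]mxE !outerE.
  by rewrite rmorphM /= conjCK mulrC.
move=> y.
have -> : ((map_mx Num.conj y)^T *m outer x x *m y) 0 0 = vdot y x * vdot x y.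
  by rewrite /outer mulmxA -mulmxA mxE big_ord1.
by rewrite [vdot x y]vdotC mul_conjC_ge0.
Qed.

Lemma vstate_state v : 0 < vdot v v -> is_state (vstate v).
Proof.
move=> vv_gt0; split; first exact: vstate_linear.
split; last by rewrite vstate1 ?gt_eqF.
by move=> a [_ a_ge0]; rewrite /vstate /vdot mulmxA divr_ge0 ?a_ge0 ?ltW.
Qed.

Section Dominated.
Variables (v : 'cV[R[i]]_n) (phi : 'M[R[i]]_n -> R[i]) (t : R[i]).
Hypotheses (vv_gt0 : 0 < vdot v v) (phi_state : is_state phi) (t_gt0 : 0 < t).
Hypothesis dominated : forall b, psd b -> t * phi b <= vstate v b.

Lemma dominated_outer_perp x y :
  vdot v x = 0 -> phi (outer x y) = 0 /\ phi (outer y x) = 0.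
Proof.
move=> vx0; have [phi_linear [phi_ge0 _]] := phi_state.
have phi_xx : phi (outer x x) = 0.
  have := dominated (psd_outer x); rewrite vstate_outer vx0 !mul0r.
  have := phi_ge0 _ (psd_outer x); rewrite le0r => /predU1P[//|phi_gt0].
  by move=> /(lt_le_trans (mulr_gt0 t_gt0 phi_gt0)); rewrite ltxx.
apply: (@conj_affine_ge0_eq0 R[i] _ _ (phi (outer y y))) => l.
have := phi_ge0 _ (psd_outer (l *: x + y)).
by rewrite outerDl !outerDr !phi_linear phi_xx mulr0 add0r addrA.
Qed.

Lemma dominated_eq_vstate : phi =1 vstate v.
Proof.
have [phi_linear [_ phi1]] := phi_state.
apply: (eq_vstate_of_perp phi_linear (lt0r_neq0 vv_gt0)) => //.
exact: dominated_outer_perp.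
Qed.

End Dominated.

Lemma vstate_pure v : 0 < vdot v v -> is_pure_state (vstate v).
Proof.
move=> vv_gt0; split; first exact: vstate_state.
move=> phi1 phi2 t phi1_state phi2_state t_gt0 t_lt1 vstateE.
have weight_ge0 phi s b : is_state phi -> 0 <= s -> psd b -> 0 <= s * phi b.
  by move=> [_ [phi_ge0 _]] s_ge0 b_psd; rewrite mulr_ge0 ?phi_ge0.
split=> a.
- apply: (dominated_eq_vstate vv_gt0 phi1_state t_gt0) => b b_psd.
  by rewrite vstateE lerDl weight_ge0 // subr_ge0 ltW.
- apply: (dominated_eq_vstate vv_gt0 phi2_state (_ : 0 < 1 - t)) => [|b b_psd].
    by rewrite subr_gt0.
  by rewrite vstateE lerDr weight_ge0 // ltW.
Qed.

End States.

Theorem proposition4p3 (R : realType) (n : nat) (T : rel 'I_n) :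
  tolerance T ->
  [<->
    (* (i) F injective on states *)
    (forall phi psi : 'M[R[i]]_n -> R[i],
        is_state phi -> is_state psi -> same_restriction T phi psi ->
        phi = psi);
    (* (ii) F injective on pure states *)
    (forall phi psi : 'M[R[i]]_n -> R[i],
        is_pure_state phi -> is_pure_state psi -> same_restriction T phi psi ->
        phi = psi);
    (* (iii) A = B *)
    (forall a : 'M[R[i]]_n, inA T a)].
Proof.
move=> [T_refl T_sym]; tfae.
- by move=> inj phi psi [phi_state _] [psi_state _]; apply: inj.
- move=> inj a i j Tij; exfalso.
  have ij : i != j by apply: contraNneq Tij => ->; rewrite T_refl.
  have Tji : ~~ T j i by rewrite T_sym.
  pose w s : 'cV[R[i]]_n := s *: delta_mx j 0 + delta_mx i 0.
  have unit1 : (1 : R[i])^* * 1 = 1 by rewrite conjC1 mulr1.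
  have unitN1 : (-1 : R[i])^* * -1 = 1 by rewrite conjCN1 mulrNN mulr1.
  have pure s : s^* * s = 1 -> is_pure_state (vstate (w s)).
    by move=> ss1; apply: vstate_pure; rewrite /w vdot_pair // ltr0n.
  have same : same_restriction T (vstate (w 1)) (vstate (w (-1))).
    by move=> b bA; rewrite /w !vstate_pair // (bA _ _ Tij) (bA _ _ Tji) !mulr0.
  have := inj _ _ (pure _ unit1) (pure _ unitN1) same.
  move=> /(congr1 (fun f => f (delta_mx i j))) /= /eqP.
  rewrite !vstate_pair_delta // mulNr eq_sym eqNr.
  by rewrite mulf_eq0 oner_eq0 invr_eq0 pnatr_eq0.
- move=> full phi psi _ _ same; apply: functional_extensionality => a.
  exact: same.
Qed.
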